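(* Assume $1\le k\le n-1$ and the setting of the context. Then $\mathbb V=\bigoplus_{\alpha\in\Omega_{\mathbb V}}V_\alpha$, where each $V_\alpha$ is a $k$-submodule of $\mathbb V$ (i.e. $[u,y_2,\dots,y_k,x_{k+1},\dots,x_n]_\sigma\in V_\alpha$ for all $\sigma$, $u\in V_\alpha$, $y_l\in\mathbb V$, $x_l\in\mathbb A$) admitting a multiplicative basis inherited from $\mathfrak B$ (a subset of $\mathfrak B$ which is a basis of $V_\alpha$), and $\mathbb A=\bigoplus_{\beta\in\Omega_{\mathbb A}}A_\beta$, where each $A_\beta$ is an ideal of $\mathbb A$ (i.e. $\langle a_1,\dots,a_n\rangle\in A_\beta$ whenever some $a_l\in A_\beta$ and the others lie in $\mathbb A$) admitting a multiplicative basis inherited from $\mathfrak B'$. Furthermore, setting $\Omega'_{\mathbb V}=\{\alpha\in\Omega_{\mathbb V}:\mathcal P(V_\alpha,\mathbb V,\dots,\mathbb V;\mathbb A,\dots,\mathbb A)\neq0\}$ and $\Omega'_{\mathbb A}=\{\beta\in\Omega_{\mathbb A}:\mathcal P(\mathbb V,\dots,\mathbb V;A_\beta,\mathbb A,\dots,\mathbb A)\neq0\}$, there is a bijection $f:\Omega'_{\mathbb V}\to\Omega'_{\mathbb A}$ such that for every $\alpha\in\Omega'_{\mathbb V}$, $\mathcal P(V_\alpha,\mathbb V,\dots,\mathbb V;A_{f(\alpha)},\mathbb A,\dots,\mathbb A)\neq0$ and $\mathcal P(V_\alpha,\mathbb V,\dots,\mathbb V;A_\beta,\mathbb A,\dots,\mathbb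 A)=0$ for every $\beta\in\Omega_{\mathbb A}$ with $\beta\neq f(\alpha)$.
   Context: Fix integers $n\ge2$, $1\le k\le n$, and an arbitrary field $\mathbb F$; $S_n$ is the symmetric group. An $n$-ary algebra is an $\mathbb F$-vector space $\mathbb A$ with an $n$-linear map $\langle\cdot,\dots,\cdot\rangle:\mathbb A^n\to\mathbb A$; a basis $\mathfrak B'=\{e_j\}_{j\in J}$ of $\mathbb A$ is multiplicative if $\langle e_{j_1},\dots,e_{j_n}\rangle\in\mathbb F e_j$ for some $j\in J$, for all $j_1,\dots,j_n\in J$. Let $\mathbb V$ be a $k$-module over $\mathbb A$: an $\mathbb F$-vector space with, for every $\sigma\in S_n$, an $n$-linear map $\mathbb V^k\times\mathbb A^{n-k}\to\mathbb V$, $(y_1,\dots,y_k,x_{k+1},\dots,x_n)\mapsto[y_1,\dots,y_k,x_{k+1},\dots,x_n]_\sigma$ (the $l$-th argument placed in position $\sigma(l)$), and assume $\mathbb V$ has a basis $\mathfrak B=\{v_i\}_{i\in I}$ which is multiplicative with respect to $\mathfrak B'$, i.e. $[v_{i_1},\dots,v_{i_k},e_{j_{k+1}},\dots,e_{j_n}]_\sigma\in\mathbb F v_r$ for some $r\in I$, for all $\sigma$ and indices. Dimensions are arbitrary. For subspaces $S_1,\dots,S_k\subseteq\mathbb V$ and $T_{k+1},\dots,T_n\subseteq\mathbb A$ let $\mathcal P(S_1,\dots,S_k;T_{k+1},\dots,T_n)$ be the linear span of all $[s_1,\dots,s_k,t_{k+1},\dots,t_n]_\sigma$ with $\sigma\in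 S_n$, $s_l\in S_l$, $t_l\in T_l$. Construction: on $\mathbb A\oplus\mathbb V$ with basis $\mathfrak B''=\mathfrak B\,\dot\cup\,\mathfrak B'$ (index set $K=I\,\dot\cup\,J$) define, for every $\sigma\in S_n$, $n$-linear maps $\llbracket\cdot\rrbracket_\sigma$ by: $\llbracket x_1,\dots,x_n\rrbracket_\sigma$ is $\langle\cdot\rangle$ applied to the arguments $x_l\in\mathbb A$ placed in positions $\sigma(l)$; $\llbracket y_1,\dots,y_k,x_{k+1},\dots,x_n\rrbracket_\sigma=[y_1,\dots,y_k,x_{k+1},\dots,x_n]_\sigma$ for $y_l\in\mathbb V$, $x_l\in\mathbb A$; and $\llbracket y_1,\dots,y_t,x_{t+1},\dots,x_n\rrbracket_\sigma=0$ for $y_l\in\mathbb V$, $x_l\in\mathbb A$, $1\le t\le n$, $t\neq k$. Then $\mathbb A\oplus\mathbb V$ with these maps is an $n$-module over itself (the case ''$k=n$'', no second-type arguments) with multiplicative basis $\mathfrak B''$. Connections on $K$: let $\overline K=\{\overline x:x\in K\}$ be new symbols, $\overline{\overline x}=x$, and write $u_x$ for the element of $\mathfrak B''$ indexed by $x\in K$. For $\sigma\in S_n$ and $x_1,\dots,x_n\in K$ let $a_\sigma(x_1,\dots,x_n)=\emptyset$ if $\llbracket u_{x_1},\dots,u_{x_n}\rrbracket_\sigma=0$ and $=\{r\}$ if it is a nonzero element of $\mathbb F u_r$; let $b_\sigma(x,\overline x_2,\dots,\overline x_n)=\{x'\in K:a_\sigma(x',x_2,\dots,x_n)=\{x\}\}$.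 For $x\in K$ and $Z=(z_2,\dots,z_n)\in(K\,\dot\cup\,\overline K)^{n-1}$ set $\mu(x,Z)=\bigcup_\sigma a_\sigma(x,Z)$ if all $z_l\in K$, $=\bigcup_\sigma b_\sigma(x,Z)$ if all $z_l\in\overline K$, and $\emptyset$ otherwise; $\phi(\mathfrak A,Z)=\bigcup_{x\in\mathfrak A}\mu(x,Z)$ for $\mathfrak A\subseteq K$. Distinct $x,x'\in K$ are connected if there are $Z_1,\dots,Z_t\in(K\,\dot\cup\,\overline K)^{n-1}$, $t\ge1$, such that with $\mathfrak A_0=\{x\}$, $\mathfrak A_m=\phi(\mathfrak A_{m-1},Z_m)$ one has $\mathfrak A_m\neq\emptyset$ for $m<t$ and $x'\in\mathfrak A_t$; each $x$ is connected to itself. This is an equivalence relation on $K$; let $\Omega$ be its set of classes and, for $\alpha\in\Omega$, $U_\alpha=\bigoplus_{x\in\alpha}\mathbb F u_x$, so $\mathbb A\oplus\mathbb V=\bigoplus_{\alpha\in\Omega}U_\alpha$. Put $V_\alpha=U_\alpha\cap\mathbb V$, $A_\alpha=U_\alpha\cap\mathbb A$, $\Omega_{\mathbb V}=\{\alpha\in\Omega:V_\alpha\neq0\}$, $\Omega_{\mathbb A}=\{\alpha\in\Omega:A_\alpha\neq0\}$. *)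

From HB Require Import structures.
From mathcomp Require Import all_boot all_order all_algebra all_fingroup.
Set Implicit Arguments.
Unset Strict Implicit.
Unset Printing Implicit Defensive.
Import GRing.Theory.
Local Open Scope ring_scope.

Section LinAlg.
Variables (F : fieldType) (M : lmodType F).

Definition span (G : M -> Prop) : M -> Prop :=
  fun z => exists (m : nat) (g : 'I_m -> M) (c : 'I_m -> F),
      (forall t, G (g t)) /\ z = \sum_(t < m) c t *: g t.

Definition nonzero_sp (S : M -> Prop) : Prop := exists z, S z /\ z <> 0.
Definition zero_sp (S : M -> Prop) : Prop := forall z, S z -> z = 0.

Variable X : Type.
Definition lin_indep (b : X -> M) (P : X -> Prop) : Prop :=
  forall (m : nat) (f : 'I_m -> X) (c : 'I_m -> F), injective f ->
    (forall t, P (f t)) -> \sum_(t < m) c t *: b (f t) = 0 -> forall t, c t = 0.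

Definition is_basis_of (S : M -> Prop) (b : X -> M) (P : X -> Prop) : Prop :=
  lin_indep b P /\
  (forall z, S z <-> span (fun y => exists x, P x /\ y = b x) z).

Definition direct_sum (W : M -> Prop) (Fam : (X -> Prop) -> M -> Prop)
    (Idx : (X -> Prop) -> Prop) : Prop :=
  (forall z, W z <-> exists (m : nat) (als : 'I_m -> X -> Prop) (zs : 'I_m -> M),
        (forall t, Idx (als t)) /\ (forall t, Fam (als t) (zs t)) /\
        z = \sum_(t < m) zs t) /\
  (forall (m : nat) (als : 'I_m -> X -> Prop) (zs : 'I_m -> M),
      injective als -> (forall t, Idx (als t)) -> (forall t, Fam (als t) (zs t)) ->
      \sum_(t < m) zs t = 0 -> forall t, zs t = 0).
End LinAlg.

Definition upd (T : Type) (p : nat) (f : 'I_p -> T) (i : 'I_p) (x : T) : 'I_p -> T :=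
  fun j => if j == i then x else f j.

Definition multilinear (F : fieldType) (M N : lmodType F) (p : nat)
    (g : ('I_p -> M) -> N) : Prop :=
  forall (i : 'I_p) (f : 'I_p -> M) (a : F) (x y : M),
    g (upd f i (a *: x + y)) = a *: g (upd f i x) + g (upd f i y).

Definition consT (T : Type) (n : nat) (x : T) (Z : 'I_n.-1 -> T) : 'I_n -> T :=
  fun l => if val l == 0%N then x
           else odflt x (omap Z (insub (val l).-1 : option 'I_n.-1)).

Section Setting.
Variables (F : fieldType) (n k : nat) (A V : lmodType F).
Variable prod : ('I_n -> A) -> A.
Variable act : 'S_n -> ('I_k -> V) -> ('I_(n - k) -> A) -> V.
Variables (I J : Type) (v : I -> V) (e : J -> A).

(* K = I \dot\cup J ; inl = index of V-basis, inr = index of A-basis *)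
Definition Kidx := (I + J)%type.

(* u_x in A (+) V, represented as A * V *)
Definition uK (x : Kidx) : (A * V)%type :=
  match x with inl i => (0, v i) | inr j => (e j, 0) end.

Definition isVb (x : Kidx) : bool := if x is inl _ then true else false.
Definition vof (x : Kidx) : V := match x with inl i => v i | inr _ => 0 end.
Definition aof (x : Kidx) : A := match x with inr j => e j | inl _ => 0 end.

Definition nV (w : 'I_n -> Kidx) : nat := #|[pred l | isVb (w l)]|.

(* tau lists first the positions of the V-arguments, then those of the
   A-arguments, each block in increasing order (stable reordering) *)
Definition stable_perm (w : 'I_n -> Kidx) (tau : 'S_n) : Prop :=
  (forall l : 'I_n, isVb (w (tau l)) = (val l < k)%N) /\
  (forall l1 l2 : 'I_n, (val l1 < val l2)%N -> ((val l2 < k) || (k <= val l1))%N ->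
      (val (tau l1) < val (tau l2))%N).

(* bval sigma w z : z = [[u_{w 1}, ..., u_{w n}]]_sigma in A (+) V *)
Definition bval (sigma : 'S_n) (w : 'I_n -> Kidx) (z : (A * V)%type) : Prop :=
  (nV w = 0%N /\ z = (prod (fun p => aof (w ((sigma^-1)%g p))), 0))
  \/ (nV w = k /\ exists tau rho : 'S_n, stable_perm w tau /\
        (forall l, rho l = sigma (tau l)) /\
        z = (0, act rho
                  (fun l : 'I_k => odflt 0 (omap (fun o => vof (w (tau o)))
                                                 (insub (val l) : option 'I_n)))
                  (fun l : 'I_(n - k) => odflt 0 (omap (fun o => aof (w (tau o)))
                                                 (insub (k + val l)%N : option 'I_n)))))
  \/ (nV w <> 0%N /\ nV w <> k /\ z = 0).

Definition a_sig (sigma : 'S_n) (w : 'I_n -> Kidx) : Kidx -> Prop :=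
  fun r => exists z, bval sigma w z /\ z <> 0 /\ exists c : F, z = c *: uK r.

Definition b_sig (sigma : 'S_n) (x : Kidx) (Z : 'I_n.-1 -> Kidx) : Kidx -> Prop :=
  fun x' => forall r, a_sig sigma (consT x' Z) r <-> r = x.

(* elements of K \dot\cup \bar K : inl y = y, inr y = \bar y *)
Definition mu (x : Kidx) (Z : 'I_n.-1 -> (Kidx + Kidx)%type) : Kidx -> Prop :=
  fun y =>
    (exists Zp : 'I_n.-1 -> Kidx, (forall l, Z l = inl (Zp l)) /\
        exists sigma, a_sig sigma (consT x Zp) y) \/
    (exists Zp : 'I_n.-1 -> Kidx, (forall l, Z l = inr (Zp l)) /\
        exists sigma, b_sig sigma x Zp y).

Definition phi (X : Kidx -> Prop) (Z : 'I_n.-1 -> (Kidx + Kidx)%type) : Kidx -> Prop :=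
  fun y => exists x, X x /\ mu x Z y.

Fixpoint chainA (Zs : nat -> 'I_n.-1 -> (Kidx + Kidx)%type) (x : Kidx) (m : nat)
  : Kidx -> Prop :=
  match m with
  | 0%N => fun y => y = x
  | p.+1 => phi (chainA Zs x p) (Zs p.+1)
  end.

Definition connected (x x' : Kidx) : Prop :=
  x = x' \/
  exists (t : nat) (Zs : nat -> 'I_n.-1 -> (Kidx + Kidx)%type),
    (1 <= t)%N /\ (forall m, (m < t)%N -> exists y, chainA Zs x m y) /\ chainA Zs x t x'.

Definition isClass (al : Kidx -> Prop) : Prop :=
  exists x, forall y, al y <-> connected x y.

Definition U_al (al : Kidx -> Prop) : (A * V)%type -> Prop :=
  span (fun z => exists x, al x /\ z = uK x).
Definition V_al (al : Kidx -> Prop) : V -> Prop := fun y => U_al al (0, y).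
Definition A_al (al : Kidx -> Prop) : A -> Prop := fun a => U_al al (a, 0).

Definition OmegaV (al : Kidx -> Prop) : Prop := isClass al /\ nonzero_sp (V_al al).
Definition OmegaA (al : Kidx -> Prop) : Prop := isClass al /\ nonzero_sp (A_al al).

Definition Pspan (S : 'I_k -> V -> Prop) (T : 'I_(n - k) -> A -> Prop) : V -> Prop :=
  span (fun z => exists (sigma : 'S_n) (y : 'I_k -> V) (x : 'I_(n - k) -> A),
            (forall l, S l (y l)) /\ (forall l, T l (x l)) /\ z = act sigma y x).

Definition firstS (T : Type) (p : nat) (S0 : T -> Prop) : 'I_p -> T -> Prop :=
  fun l => if val l == 0%N then S0 else (fun _ => True).
Definition allS (T : Type) (p : nat) : 'I_p -> T -> Prop := fun _ _ => True.

Definition OmegaV' (al : Kidx -> Prop) : Prop :=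
  OmegaV al /\ nonzero_sp (Pspan (firstS (V_al al)) (@allS A (n - k))).
Definition OmegaA' (be : Kidx -> Prop) : Prop :=
  OmegaA be /\ nonzero_sp (Pspan (@allS V k) (firstS (A_al be))).

Definition withFirst (T : Type) (p : nat) (u : T) (ys : 'I_p -> T) : 'I_p -> T :=
  fun l => if val l == 0%N then u else ys l.
End Setting.

(* Connectedness is the equivalence relation generated by the steps x -> r, where u_r is,
   up to a nonzero scalar, a product with first argument u_x; it is symmetric because
   a_sigma is single-valued, so b_sigma provides the step back.  A nonzero product
   [v_i1, ..., v_ik, e_j(k+1), ..., e_jn]_sigma = c v_r links r to i1 and, after a stable
   reordering of the arguments absorbed into sigma, also to j(k+1); a nonzero product of
   basis vectors of A links its result to every argument.  Hence every class spans a
   submodule of V (an ideal of A) with the inherited basis, the classes partition B and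
   B', and P(V_alpha, V, ..., V; A_beta, A, ..., A) vanishes unless alpha = beta.  So
   Omega'_V = Omega'_A and the bijection f is the identity. *)

From HB Require Import structures.
From mathcomp Require Import all_boot all_order all_algebra all_fingroup.
From mathcomp Require Import zify.
From Stdlib Require Import ClassicalEpsilon FunctionalExtensionality PropExtensionality Relations.
Import GRing.Theory.
Local Open Scope ring_scope.
Set Implicit Arguments.
Unset Strict Implicit.
Unset Printing Implicit Defensive.

Definition catf (T : Type) (m1 m2 : nat) (f1 : 'I_m1 -> T) (f2 : 'I_m2 -> T) :
  'I_(m1 + m2) -> T :=
  fun t => match split t with inl a => f1 a | inr b => f2 b end.

Section Catf.
Variables (T : Type) (m1 m2 : nat) (f1 : 'I_m1 -> T) (f2 : 'I_m2 -> T).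

Lemma catf_lshift a : catf f1 f2 (lshift m2 a) = f1 a.
Proof. by rewrite /catf (unsplitK (inl a)). Qed.

Lemma catf_rshift a : catf f1 f2 (rshift m1 a) = f2 a.
Proof. by rewrite /catf (unsplitK (inr a)). Qed.

Lemma catf_forall (P : T -> Prop) :
  (forall t, P (f1 t)) -> (forall t, P (f2 t)) -> forall t, P (catf f1 f2 t).
Proof. by move=> H1 H2 t; rewrite /catf; case: split. Qed.

Lemma catf_inj : injective f1 -> injective f2 ->
  (forall a b, f1 a <> f2 b) -> injective (catf f1 f2).
Proof.
move=> i1 i2 disj t1 t2; rewrite -[t1]splitK -[t2]splitK.
case: (split t1) => a1; case: (split t2) => a2;
  rewrite /= ?catf_lshift ?catf_rshift => h.
- by rewrite (i1 _ _ h).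
- by case: (disj _ _ h).
- by case: (disj _ _ (esym h)).
- by rewrite (i2 _ _ h).
Qed.
End Catf.

Section Span.
Variables (F : fieldType) (M : lmodType F).
Implicit Types G : M -> Prop.

Lemma span0 G : span G 0.
Proof.
exists 0%N, (fun _ => 0), (fun _ => 0); split; first by case.
by rewrite big_ord0.
Qed.

Lemma span_gen G x : G x -> span G x.
Proof.
move=> Gx; exists 1%N, (fun _ => x), (fun _ => 1); split => //.
by rewrite big_ord1 scale1r.
Qed.

Lemma spanZ G a z : span G z -> span G (a *: z).
Proof.
move=> [m [g [c [Hg ->]]]]; exists m, g, (fun t => a * c t); split => //.
by rewrite scaler_sumr; apply: eq_bigr => t _; rewrite scalerA.
Qed.

Lemma spanD G z1 z2 : span G z1 -> span G z2 -> span G (z1 + z2).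
Proof.
move=> [m1 [g1 [c1 [H1 ->]]]] [m2 [g2 [c2 [H2 ->]]]].
exists (m1 + m2)%N, (catf g1 g2), (catf c1 c2); split; first exact: catf_forall.
by rewrite big_split_ord; congr (_ + _); apply: eq_bigr => t _;
  rewrite ?catf_lshift ?catf_rshift.
Qed.

Lemma span_sum G (m : nat) (P : pred 'I_m) (z : 'I_m -> M) :
  (forall t, P t -> span G (z t)) -> span G (\sum_(t < m | P t) z t).
Proof. by move=> H; apply: (big_ind (span G)) => //; [exact: span0 | exact: spanD]. Qed.

Lemma span_trans G1 G2 z : (forall y, G1 y -> span G2 y) -> span G1 z -> span G2 z.
Proof. by move=> H [m [g [c [Hg ->]]]]; apply: span_sum => t _; apply/spanZ/H. Qed.

Lemma span_zero G : (forall y, G y -> y = 0) -> zero_sp (span G).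
Proof. by move=> h z [m [g [c [Hg ->]]]]; apply: big1 => t _; rewrite (h _ (Hg t)) scaler0. Qed.

Lemma span_image (N : lmodType F) (h : M -> N) G z : linear h ->
  span G z -> span (fun y => exists x, G x /\ y = h x) (h z).
Proof.
move=> hlin [m [g [c [Hg ->]]]]; exists m, (fun t => h (g t)), c.
split; first by move=> t; exists (g t).
have h0 : h 0 = 0 by have := hlin (-1) 0 0; rewrite scaler0 addr0 scaleN1r addNr.
have hD x y : h (x + y) = h x + h y by have := hlin 1 x y; rewrite !scale1r.
have hZ a x : h (a *: x) = a *: h x by rewrite -[a *: x]addr0 hlin h0 addr0.
by rewrite (big_morph h hD h0); apply: eq_bigr => t _; rewrite hZ.
Qed.
End Span.

Section Independence.
Variables (F : fieldType) (M : lmodType F) (X : Type) (b : X -> M).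
Local Notation fspan Q := (span (fun y => exists x, Q x /\ y = b x)).

Lemma span_family_rep (Q : X -> Prop) z : fspan Q z ->
  exists m (f : 'I_m -> X) (c : 'I_m -> F),
    (forall t, Q (f t)) /\ z = \sum_(t < m) c t *: b (f t).
Proof.
move=> [m [g [c [Hg ->]]]]; have [f Hf] := choice _ Hg.
exists m, f, c; split; first by move=> t; case: (Hf t).
by apply: eq_bigr => t _; case: (Hf t) => _ ->.
Qed.

Lemma combination_dedup (m : nat) (f : 'I_m -> X) (c : 'I_m -> F) :
  exists m' (g : 'I_m' -> X) (d : 'I_m' -> F), injective g /\
    (forall t, exists s, g t = f s) /\
    \sum_(s < m) c s *: b (f s) = \sum_(t < m') d t *: b (g t).
Proof.
elim: m f c => [|m IH] f c.
  by exists 0%N, f, c; split; [case | split => // t; exists t].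
have [m' [g [d [gi [gim gs]]]]] := IH (fun t => f (lift ord0 t)) (fun t => c (lift ord0 t)).
rewrite big_ord_recl gs.
case: (classic (exists t, g t = f ord0)) => [[t0 Ht0]|Hno].
  exists m', g, (fun t => d t + (if t == t0 then c ord0 else 0)); split => //.
  split; first by move=> t; have [s ->] := gim t; exists (lift ord0 s).
  under [RHS]eq_bigr => t _ do rewrite scalerDl.
  rewrite big_split /= addrC; congr (_ + _).
  by rewrite (bigD1 t0) //= eqxx Ht0 big1 ?addr0 // => t /negbTE ->; rewrite scale0r.
exists m'.+1, (fun t => if unlift ord0 t is Some t' then g t' else f ord0),
  (fun t => if unlift ord0 t is Some t' then d t' else c ord0).
split.
  move=> t1 t2; case: unliftP => [j1 ->|->]; case: unliftP => [j2 ->|->] //.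
  - by move/gi => ->.
  - by move=> H; case: Hno; exists j1.
  - by move=> H; case: Hno; exists j2.
split.
  move=> t; case: unliftP => [j _|_]; last by exists ord0.
  by have [s ->] := gim j; exists (lift ord0 s).
by rewrite big_ord_recl unlift_none; congr (_ + _); apply: eq_bigr => t _; rewrite liftK.
Qed.

Lemma span_family_inj_rep (Q : X -> Prop) z : fspan Q z ->
  exists m (g : 'I_m -> X) (d : 'I_m -> F), injective g /\ (forall t, Q (g t)) /\
    z = \sum_(t < m) d t *: b (g t).
Proof.
case/span_family_rep => m [f [c [Qf ->]]].
have [m' [g [d [gi [gim ->]]]]] := combination_dedup f c.
by exists m', g, d; split => //; split => // t; have [s ->] := gim t.
Qed.

Hypothesis hind : lin_indep b (fun _ => True).

Lemma span_family_disjoint (Q : X -> Prop) z :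
  fspan Q z -> fspan (fun x => ~ Q x) z -> z = 0.
Proof.
move=> /span_family_inj_rep [m1 [g1 [d1 [i1 [Q1 E1]]]]]
  /span_family_inj_rep [m2 [g2 [d2 [i2 [Q2 E2]]]]].
have gi : injective (catf g1 g2).
  by apply: catf_inj => // a a' ea; apply: (Q2 a'); rewrite -ea.
have hs : \sum_(t < m1 + m2) catf d1 (fun t => - d2 t) t *: b (catf g1 g2 t) = 0.
  rewrite big_split_ord /=.
  under eq_bigr => t _ do rewrite !catf_lshift.
  under [X in _ + X]eq_bigr => t _ do rewrite !catf_rshift scaleNr.
  by rewrite sumrN -E1 -E2 subrr.
have d0 := hind gi (fun _ => I) hs.
rewrite E1 big1 // => t _.
by have := d0 (lshift m2 t); rewrite catf_lshift => ->; rewrite scale0r.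
Qed.

Lemma basis_scale_eq0 c x : c *: b x = 0 -> c = 0.
Proof.
move=> H; apply: (@hind 1 (fun _ => x) (fun _ => c) _ (fun _ => I) _ ord0).
- by move=> a a' _; rewrite (ord1 a) (ord1 a').
- by rewrite big_ord1.
Qed.

Lemma basis_neq0 x : b x <> 0.
Proof. by rewrite -[b x]scale1r => /basis_scale_eq0 /eqP; rewrite oner_eq0. Qed.

Lemma basis_scale_inj c1 c2 x1 x2 : c1 *: b x1 = c2 *: b x2 -> c1 <> 0 -> x1 = x2.
Proof.
move=> H c10; apply: NNPP => ne.
pose f (t : 'I_2) := if val t == 0%N then x1 else x2.
pose c (t : 'I_2) := if val t == 0%N then c1 else - c2.
have finj : injective f.
  move=> [[|[|?]] ?] [[|[|?]] ?] //=; rewrite /f /= => h; try (by apply: val_inj);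
  by case: ne; rewrite h.
apply: c10; apply: (@hind 2 f c finj (fun _ => I) _ ord0).
by rewrite big_ord_recl big_ord1 /c /f /= H scaleNr subrr.
Qed.

Lemma direct_sum_partition (Y : Type) (emb : X -> Y) (Idx : (Y -> Prop) -> Prop) :
  (forall z, fspan (fun _ => True) z) ->
  (forall x, exists al, Idx al /\ al (emb x)) ->
  (forall al1 al2 x, Idx al1 -> Idx al2 -> al1 (emb x) -> al2 (emb x) -> al1 = al2) ->
  direct_sum (fun _ => True) (fun al => fspan (fun x => al (emb x))) Idx.
Proof.
move=> hspan hcov hdisj; split.
  move=> z; split => // _.
  have [m [f [c [_ E]]]] := span_family_rep (hspan z).
  have [als Hals] := choice _ (fun t => hcov (f t)).
  exists m, als, (fun t => c t *: b (f t)); split; first by move=> t; case: (Hals t).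
  split => // t; apply/spanZ/span_gen; exists (f t); split => //.
  by case: (Hals t).
move=> m als zs ai hI hF hsum t0.
apply: (@span_family_disjoint (fun x => als t0 (emb x))); first exact: hF.
have -> : zs t0 = - \sum_(t < m | t != t0) zs t.
  by move: hsum; rewrite (bigD1 t0) //= => /eqP; rewrite addr_eq0 => /eqP.
rewrite -scaleN1r; apply/spanZ/span_sum => t tt0.
apply: span_trans (hF t) => y [x [ax ->]]; apply: span_gen; exists x; split => // a0.
by move: tt0; rewrite (ai _ _ (hdisj _ _ _ (hI t) (hI t0) ax a0)) eqxx.
Qed.
End Independence.

Lemma upd_id (T : Type) (p : nat) (f : 'I_p -> T) i : upd f i (f i) = f.
Proof. by apply: functional_extensionality => j; rewrite /upd; case: eqP => // ->. Qed.

Section Multilinear.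
Variables (F : fieldType) (M N : lmodType F) (p : nat) (g : ('I_p -> M) -> N).
Hypothesis g_ml : multilinear g.

Lemma multilinear_upd0 f i : g (upd f i 0) = 0.
Proof.
have H := g_ml i f 1 0 0; rewrite !scale1r addr0 in H.
by apply: (addrI (g (upd f i 0))); rewrite addr0 -H.
Qed.

Lemma multilinear_upd_sum f i m (c : 'I_m -> F) (x : 'I_m -> M) :
  g (upd f i (\sum_(t < m) c t *: x t)) = \sum_(t < m) c t *: g (upd f i (x t)).
Proof.
elim: m c x => [|m IH] c x; first by rewrite !big_ord0 multilinear_upd0.
by rewrite !big_ord_recl g_ml IH.
Qed.

(* Induction on the number of leading arguments already expanded into generators. *)
Lemma multilinear_span_ind (G : 'I_p -> M -> Prop) (S : N -> Prop) :
  S 0 -> (forall a b, S a -> S b -> S (a + b)) -> (forall c a, S a -> S (c *: a)) ->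
  (forall f, (forall l, G l (f l)) -> S (g f)) ->
  forall f, (forall l, span (G l) (f l)) -> S (g f).
Proof.
move=> S0 SD SZ base.
suff key q f : (forall l : 'I_p, (val l < q)%N -> span (G l) (f l)) ->
    (forall l : 'I_p, (q <= val l)%N -> G l (f l)) -> S (g f).
  move=> f H; apply: (key p) => // l hl.
  by move: (ltn_ord l); rewrite ltnNge hl.
elim: q f => [|q IH] f H1 H2; first by apply: base => l; apply: H2.
case: (ltnP q p) => [qp|pq]; last first.
  apply: IH => l hl; first by apply: H1; apply: ltnW.
  by move: (ltn_ord l); rewrite ltnNge (leq_trans pq hl).
set i := Ordinal qp.
have [m [x [c [Hx Ef]]]] := H1 i (ltnSn q).
rewrite -(upd_id f i) Ef multilinear_upd_sum.
apply: (big_ind S) => // t _; apply: SZ; apply: IH => l hl; rewrite /upd.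
  have -> : (l == i) = false by apply/negbTE/eqP => e; move: hl; rewrite e ltnn.
  by apply: H1; apply: ltnW.
case: eqP => [->//|ne]; apply: H2.
by rewrite ltn_neqAle hl andbT; apply/eqP => e; apply: ne; apply: val_inj.
Qed.
End Multilinear.

Section StablePerm.
Variables (n k : nat) (I J : Type).

Lemma incr_ord_gap (h : 'I_n -> 'I_n) :
  (forall l1 l2 : 'I_n, (val l1 < val l2)%N -> (val (h l1) < val (h l2))%N) ->
  forall d (l1 l2 : 'I_n), val l2 = (val l1 + d)%N -> (val (h l1) + d <= val (h l2))%N.
Proof.
move=> hi; elim=> [|d IH] l1 l2 E.
  by rewrite addn0 in E; rewrite addn0 (_ : l2 = l1) //; apply: val_inj.
have lt : (val l1 + d < n)%N by rewrite (leq_trans _ (ltn_ord l2)) // E addnS.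
have := IH l1 (Ordinal lt) erefl.
have := hi (Ordinal lt) l2; rewrite /= E addnS ltnSn => /(_ isT).
rewrite addnS => a b; exact: leq_ltn_trans b a.
Qed.

Lemma incr_ord_id (h : 'I_n -> 'I_n) :
  (forall l1 l2 : 'I_n, (val l1 < val l2)%N -> (val (h l1) < val (h l2))%N) ->
  forall l, h l = l.
Proof.
move=> hi l; apply: val_inj.
have ltl := ltn_ord l.
have hN : (n.-1 < n)%N by lia.
have H := @incr_ord_gap h hi (n.-1 - val l)%N l (Ordinal hN) ltac:(rewrite /=; lia).
have := ltn_ord (h (Ordinal hN)).
have l0 : (0 < n)%N by lia.
have H2 := @incr_ord_gap h hi (val l) (Ordinal l0) l ltac:(rewrite /=; lia).
move: H H2 => /=; lia.
Qed.

Lemma stable_perm_uniq (w : 'I_n -> Kidx I J) (t1 t2 : 'S_n) :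
  stable_perm k w t1 -> stable_perm k w t2 -> t1 = t2.
Proof.
move=> [v1 o1] [v2 o2].
pose h := (t1 * t2^-1)%g.
have th x : t2 (h x) = t1 x by rewrite /h permM permKV.
have bl x : (val (h x) < k)%N = (val x < k)%N by rewrite -v2 th v1.
have same (l1 l2 : 'I_n) : (val l1 < val l2)%N -> ((val l2 < k) || (k <= val l1))%N ->
    (val (h l1) < val (h l2))%N.
  move=> lt hb; rewrite ltnNge; apply/negP; rewrite leq_eqVlt => /orP [/eqP eq|lt'].
    by move: lt; rewrite (perm_inj (val_inj eq)) ltnn.
  have hb' : ((val (h l1) < k) || (k <= val (h l2)))%N.
    case/orP: hb => hb; apply/orP; first by left; rewrite bl; apply: ltn_trans lt hb.
    by right; rewrite leqNgt bl -leqNgt (leq_trans hb (ltnW lt)).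
  have := o2 _ _ lt' hb'; rewrite !th.
  have := o1 _ _ lt hb; lia.
suff inc (l1 l2 : 'I_n) : (val l1 < val l2)%N -> (val (h l1) < val (h l2))%N.
  by apply/permP => x; rewrite -th (incr_ord_id inc).
move=> lt.
case: (ltnP (val l2) k) => l2k; first by apply: same => //; rewrite l2k.
case: (ltnP (val l1) k) => l1k; last by apply: same => //; rewrite l1k orbT.
have a : (val (h l1) < k)%N by rewrite bl.
have b : (k <= val (h l2))%N by rewrite leqNgt bl -leqNgt.
exact: leq_trans a b.
Qed.

Lemma nV_stable_perm (w : 'I_n -> Kidx I J) tau :
  (k <= n)%N -> stable_perm k w tau -> nV w = k.
Proof.
move=> kn [vt _]; rewrite /nV -sum1_card (reindex_inj (@perm_inj _ tau)) /=.
under eq_bigl => l do rewrite unfold_in /= vt.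
by rewrite (big_ord_narrow (F := fun _ => 1%N) kn) sum1_card card_ord.
Qed.
End StablePerm.

Lemma nV_eq0 (n : nat) (I J : Type) (w : 'I_n -> Kidx I J) :
  (forall l, isVb (w l) = false) -> nV w = 0%N.
Proof. by move=> h; apply: eq_card0 => l; rewrite unfold_in /= h. Qed.

Section Connectivity.
Variables (F : fieldType) (n k : nat) (A V : lmodType F) (prod : ('I_n -> A) -> A)
  (act : 'S_n -> ('I_k -> V) -> ('I_(n - k) -> A) -> V)
  (I J : Type) (v : I -> V) (e : J -> A).
Hypotheses (hk1 : (1 <= k)%N)
  (vind : lin_indep v (fun _ => True)) (eind : lin_indep e (fun _ => True)).

Local Notation K := (Kidx I J).
Local Notation uK := (uK v e).
Local Notation bval := (bval prod act v e).
Local Notation a_sig := (a_sig prod act v e).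
Local Notation mu := (mu prod act v e).
Local Notation chainA := (chainA prod act v e).
Local Notation connected := (connected prod act v e).
Local Notation isClass := (isClass prod act v e).

Lemma scale_uKl c i : c *: uK (inl i) = (0, c *: v i).
Proof. by rewrite -[LHS]/(c *: 0, c *: v i) scaler0. Qed.

Lemma scale_uKr c j : c *: uK (inr j) = (c *: e j, 0).
Proof. by rewrite -[LHS]/(c *: e j, c *: 0) scaler0. Qed.

Lemma scale_uK_neq0 c r : c != 0 -> c *: uK r <> 0.
Proof.
move=> /eqP c0; case: r => [i|j]; rewrite ?scale_uKl ?scale_uKr => -[] h.
- exact/c0/(basis_scale_eq0 vind h).
- exact/c0/(basis_scale_eq0 eind h).
Qed.

Lemma scale_uK_inj (z : A * V) c1 c2 r1 r2 :
  z <> 0 -> z = c1 *: uK r1 -> z = c2 *: uK r2 -> r1 = r2.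
Proof.
move=> nz E1 E2.
have c1n : c1 <> 0 by move=> c0; apply: nz; rewrite E1 c0 scale0r.
move: E2; rewrite {}E1 => {nz}.
case: r1 => [i1|j1]; case: r2 => [i2|j2]; rewrite ?scale_uKl ?scale_uKr => E;
  move: (congr1 fst E) (congr1 snd E) => /= h1 h2.
- by rewrite (basis_scale_inj vind h2 c1n).
- by case: (c1n (basis_scale_eq0 vind h2)).
- by case: (c1n (basis_scale_eq0 eind h1)).
- by rewrite (basis_scale_inj eind h1 c1n).
Qed.

Lemma bval_functional sigma w z1 z2 : bval sigma w z1 -> bval sigma w z2 -> z1 = z2.
Proof.
have k0 : k <> 0%N by lia.
case=> [[n1 ->]|[[n1 [t1 [r1 [s1 [hr1 ->]]]]]|[n1 [n1' ->]]]];
case=> [[n2 ->]|[[n2 [t2 [r2 [s2 [hr2 ->]]]]]|[n2 [n2' ->]]]] //;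
  try (by rewrite n1 in n2; case: k0); try (by rewrite n2 in n1; case: k0);
  try (by case: n2'); try (by case: n1').
have et := stable_perm_uniq s1 s2; subst t2.
by have -> : r1 = r2 by apply/permP => l; rewrite hr1 hr2.
Qed.

Lemma a_sig_functional sigma w r1 r2 : a_sig sigma w r1 -> a_sig sigma w r2 -> r1 = r2.
Proof.
move=> [z1 [b1 [nz1 [c1 E1]]]] [z2 [b2 [nz2 [c2 E2]]]].
by rewrite -(bval_functional b1 b2) in E2; apply: scale_uK_inj nz1 E1 E2.
Qed.

Definition step (x y : K) := exists Z, mu x Z y.

(* a_sigma is single-valued, so y in a_sigma(x, Z) gives x in b_sigma(y, Z). *)
Lemma step_sym x y : step x y -> step y x.
Proof.
move=> [Z [[Zp [hZ [s hs]]]|[Zp [hZ [s hs]]]]].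
- exists (fun l => inr (Zp l)); right; exists Zp; split => //; exists s.
  by move=> r; split => [h|->]; [apply: a_sig_functional h hs | exact: hs].
- exists (fun l => inl (Zp l)); left; exists Zp; split => //; exists s.
  exact: (proj2 (hs x) erefl).
Qed.

Local Notation rt := (clos_refl_trans K step).

Lemma chainA_ext Zs Zs' x m : (forall i, (0 < i <= m)%N -> Zs i = Zs' i) ->
  forall y, chainA Zs x m y <-> chainA Zs' x m y.
Proof.
elim: m => [|m IH] H y //=.
rewrite /phi H ?leqnn //.
have IH' : forall y, chainA Zs x m y <-> chainA Zs' x m y.
  by apply: IH => i /andP [i0 im]; apply: H; rewrite i0 (leqW im).
by split => -[w [hw hm]]; exists w; split => //; apply/IH'.
Qed.

Lemma chainA_rt Zs x m y : chainA Zs x m y -> rt x y.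
Proof.
elim: m y => [|m IH] y /=; first by move=> ->; apply: rt_refl.
by move=> [w [hw hm]]; apply: rt_trans (IH _ hw) (rt_step _ _ _ _ _); exists (Zs m.+1).
Qed.

Lemma connected_step x y z : connected x y -> step y z -> connected x z.
Proof.
move=> hc [Z hZ]; right.
case: hc => [exy|[t [Zs [ht [hne hch]]]]].
  subst y; exists 1%N, (fun _ => Z); split => //; split; last by exists x.
  by move=> m; rewrite ltnS leqn0 => /eqP ->; exists x.
pose Zs' i := if i == t.+1 then Z else Zs i.
have ext m : (m <= t)%N -> forall w, chainA Zs x m w <-> chainA Zs' x m w.
  move=> mt; apply: chainA_ext => i /andP [_ hi]; rewrite /Zs'.
  by rewrite (_ : (i == t.+1) = false) //; apply/negbTE; rewrite neq_ltn (leq_ltn_trans hi).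
exists t.+1, Zs'; split => //; split.
  move=> m; rewrite ltnS leq_eqVlt => /orP [/eqP ->|mt]; first by exists y; apply/ext.
  by have [w hw] := hne m mt; exists w; apply/ext => //; apply: ltnW.
by exists y; split; [apply/ext | rewrite /Zs' eqxx].
Qed.

Lemma connectedE x y : connected x y <-> rt x y.
Proof.
split; first by case=> [->|[t [Zs [_ [_ h]]]]]; [apply: rt_refl | apply: chainA_rt h].
move=> h; apply clos_rt_rtn1 in h; induction h as [|y0 z0 hs _ IH]; first by left.
exact: connected_step IH hs.
Qed.

Lemma connected_sym x y : connected x y -> connected y x.
Proof.
rewrite !connectedE; elim=> [a b h|a|a b c _ h1 _ h2].
- by apply/rt_step/step_sym.
- exact: rt_refl.
- exact: rt_trans h2 h1.
Qed.

Lemma connected_trans x y z : connected x y -> connected y z -> connected x z.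
Proof. by rewrite !connectedE; apply: rt_trans. Qed.

Lemma class_step al x y : isClass al -> step x y -> al x <-> al y.
Proof.
move=> [x0 h] s; rewrite !h.
have cxy : connected x y by apply/connectedE/rt_step.
split=> c0; [exact: connected_trans c0 cxy | exact: connected_trans c0 (connected_sym cxy)].
Qed.

Lemma class_eq al1 al2 x : isClass al1 -> isClass al2 -> al1 x -> al2 x -> al1 = al2.
Proof.
move=> [x1 h1] [x2 h2] /h1 a1 /h2 a2.
apply: functional_extensionality => y; apply: propositional_extensionality.
rewrite h1 h2; have c12 := connected_trans a1 (connected_sym a2).
by split => h; [apply: connected_trans (connected_sym c12) h | apply: connected_trans c12 h].
Qed.

Lemma class_of x : isClass (connected x) /\ connected x x.
Proof. by split; [exists x | left]. Qed.

Hypothesis hkn : (k <= n - 1)%N.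

Lemma n_gt0 : (0 < n)%N. Proof. lia. Qed.
Lemma n_sub_k_gt0 : (0 < n - k)%N. Proof. lia. Qed.
Lemma k_lt_n : (k < n)%N. Proof. lia. Qed.

Definition o0 : 'I_n := Ordinal n_gt0.
Definition i0 : 'I_k := Ordinal hk1.
Definition j0 : 'I_(n - k) := Ordinal n_sub_k_gt0.

Definition tailT (T : Type) (w : 'I_n -> T) : 'I_n.-1 -> T :=
  fun q => w (insubd o0 (val q).+1).

Lemma consT_tailT (T : Type) (w : 'I_n -> T) : consT (w o0) (tailT w) = w.
Proof.
apply: functional_extensionality => l; rewrite /consT.
case: eqP => [l0|l0]; first by congr (w _); apply: val_inj.
have l_gt0 : (0 < val l)%N by rewrite lt0n; apply/eqP.
have lt : ((val l).-1 < n.-1)%N by rewrite -ltnS (prednK l_gt0) (prednK n_gt0) ltn_ord.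
by rewrite insubT /tailT /=; congr (w _); apply: val_inj; rewrite val_insubd (prednK l_gt0) ltn_ord.
Qed.

Lemma step_of_bval sigma w c r : c != 0 -> bval sigma w (c *: uK r) -> step (w o0) r.
Proof.
move=> c0 hb; exists (fun q => inl (tailT w q)); left; exists (tailT w); split => //.
exists sigma; rewrite consT_tailT.
by exists (c *: uK r); split => //; split; [exact: scale_uK_neq0 | exists c].
Qed.

Definition blockT (ivs : 'I_k -> I) (js : 'I_(n - k) -> J) (l : 'I_n) : K :=
  if (val l < k)%N then inl (ivs (insubd i0 (val l)))
  else inr (js (insubd j0 (val l - k)%N)).

Lemma blockT_o0 ivs js : blockT ivs js o0 = inl (ivs i0).
Proof. by rewrite /blockT /= hk1; congr (inl (ivs _)); apply: val_inj; rewrite val_insubd hk1. Qed.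

Lemma blockT_k ivs js : blockT ivs js (Ordinal k_lt_n) = inr (js j0).
Proof.
rewrite /blockT /= ltnn subnn; congr (inr (js _)); apply: val_inj.
by rewrite val_insubd n_sub_k_gt0.
Qed.

(* Reordering the arguments by tau^-1 is undone by the stable permutation tau. *)
Lemma bval_blockT sigma (tau : 'S_n) ivs js :
  (forall l1 l2 : 'I_n, (val l1 < val l2)%N -> ((val l2 < k) || (k <= val l1))%N ->
     (val (tau l1) < val (tau l2))%N) ->
  bval (tau^-1 * sigma)%g (fun l => blockT ivs js ((tau^-1)%g l))
    (0, act sigma (fun l => v (ivs l)) (fun l => e (js l))).
Proof.
move=> tau_mono.
have st : stable_perm k (fun l => blockT ivs js ((tau^-1)%g l)) tau.
  by split => // l; rewrite permK /blockT; case: ifP.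
right; left; split; first by apply: nV_stable_perm st; lia.
exists tau, sigma; split => //; split; first by move=> l; rewrite permM permK.
congr (0, act sigma _ _); apply: functional_extensionality => l.
  have lt : (val l < n)%N := ltn_trans (ltn_ord l) k_lt_n.
  by rewrite insubT /= permK /blockT /= ltn_ord valKd.
have lt : (k + val l < n)%N by rewrite -ltn_subRL ltn_ord.
rewrite insubT /= permK /blockT /= (_ : (k + val l < k)%N = false); last by lia.
by rewrite addKn valKd.
Qed.

Lemma step_act_V sigma ivs js c r : c != 0 ->
  act sigma (fun l => v (ivs l)) (fun l => e (js l)) = c *: v r ->
  step (inl (ivs i0)) (inl r).
Proof.
move=> c0 E; have := @bval_blockT sigma 1 ivs js.
rewrite invg1 mul1g E -scale_uKl => /(_ _) /(step_of_bval c0).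
by rewrite perm1 blockT_o0; apply => l1 l2; rewrite !perm1.
Qed.

Definition rot_fun (m : nat) : nat := if (m < k)%N then m.+1 else if m == k then 0%N else m.

Lemma rot_fun_lt (l : 'I_n) : (rot_fun (val l) < n)%N.
Proof. by have := (ltn_ord l : (val l < n)%N); rewrite /rot_fun; do ![case: ifP => ?]; lia. Qed.

Lemma rot_inj : injective (fun l => Ordinal (rot_fun_lt l)).
Proof.
move=> a b /(congr1 val) /=; rewrite /rot_fun => h; apply: ord_inj; move: h.
by do ![case: ifP => ?]; lia.
Qed.

(* The cycle (0 1 ... k) of positions, which moves the first A-argument to the front. *)
Definition rot : 'S_n := perm rot_inj.

Lemma rot_mono (l1 l2 : 'I_n) : (val l1 < val l2)%N -> ((val l2 < k) || (k <= val l1))%N ->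
  (val (rot l1) < val (rot l2))%N.
Proof.
rewrite !permE /= /rot_fun => lt hb.
by case/orP: hb => hb; do ![case: ifP => ?]; simpl in *; lia.
Qed.

Lemma rotV_o0 : (rot^-1)%g o0 = Ordinal k_lt_n.
Proof.
have -> : o0 = rot (Ordinal k_lt_n) by apply: val_inj; rewrite permE /= /rot_fun ltnn eqxx.
exact: permK.
Qed.

Lemma step_act_A sigma ivs js c r : c != 0 ->
  act sigma (fun l => v (ivs l)) (fun l => e (js l)) = c *: v r ->
  step (inr (js j0)) (inl r).
Proof.
move=> c0 E; have := @bval_blockT sigma rot ivs js rot_mono.
by rewrite E -scale_uKl => /(step_of_bval c0); rewrite /= rotV_o0 blockT_k.
Qed.

Lemma step_prod (js : 'I_n -> J) c r l0 : c != 0 ->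
  prod (fun l => e (js l)) = c *: e r -> step (inr (js l0)) (inr r).
Proof.
move=> c0 E; pose sg := tperm o0 l0.
have hb : bval sg (fun l => inr (js (sg l))) (c *: uK (inr r)).
  left; split; first exact: nV_eq0.
  rewrite scale_uKr -E; congr (prod _, 0); apply: functional_extensionality => p.
  by rewrite /= permKV.
by have := step_of_bval c0 hb; rewrite /= tpermL.
Qed.
End Connectivity.

Definition first_gens (T X : Type) (p : nat) (b : X -> T) (P : X -> Prop) (l : 'I_p) :
  T -> Prop :=
  fun z => exists x, (val l = 0%N -> P x) /\ z = b x.

Lemma span_first_gens (F : fieldType) (T : lmodType F) (X : Type) (p : nat) (b : X -> T)
    (P : X -> Prop) (l : 'I_p) z :
  (val l = 0%N -> span (fun y => exists x, P x /\ y = b x) z) ->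
  span (fun y => exists x, True /\ y = b x) z -> span (first_gens b P l) z.
Proof.
move=> h0 hT; have [l0|l0] := eqVneq (val l) 0%N.
  by apply: span_trans (h0 l0) => y [x [Px ->]]; apply: span_gen; exists x.
apply: span_trans hT => y [x [_ ->]]; apply: span_gen.
by exists x; split => // /eqP; rewrite (negbTE l0).
Qed.

Section Decomposition.
Variables (F : fieldType) (n k : nat).
Hypotheses (hk1 : (1 <= k)%N) (hkn : (k <= n - 1)%N).
Variables (A V : lmodType F) (prod : ('I_n -> A) -> A)
  (act : 'S_n -> ('I_k -> V) -> ('I_(n - k) -> A) -> V)
  (I J : Type) (v : I -> V) (e : J -> A).
Hypotheses (prod_ml : multilinear prod)
  (act_ml1 : forall sigma x, multilinear (fun y => act sigma y x))
  (act_ml2 : forall sigma y, multilinear (fun x => act sigma y x))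
  (e_basis : is_basis_of (fun _ => True) e (fun _ => True))
  (v_basis : is_basis_of (fun _ => True) v (fun _ => True))
  (e_mult : forall js : 'I_n -> J, exists (j : J) (c : F), prod (fun l => e (js l)) = c *: e j)
  (v_mult : forall (sigma : 'S_n) (ivs : 'I_k -> I) (js : 'I_(n - k) -> J),
      exists (r : I) (c : F), act sigma (fun l => v (ivs l)) (fun l => e (js l)) = c *: v r).

Let vind : lin_indep v (fun _ => True) := proj1 v_basis.
Let eind : lin_indep e (fun _ => True) := proj1 e_basis.
Let vspan z : span (fun y => exists i, True /\ y = v i) z := proj1 (proj2 v_basis z) Logic.I.
Let espan z : span (fun y => exists j, True /\ y = e j) z := proj1 (proj2 e_basis z) Logic.I.

Local Notation VA := (V_al v e).
Local Notation AA := (A_al v e).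
Local Notation isClass := (isClass prod act v e).
Local Notation i0 := (i0 hk1).
Local Notation j0 := (j0 hk1 hkn).
Local Notation class_step := (class_step hk1 vind eind).
Local Notation class_eq := (class_eq hk1 vind eind).
Local Notation step_act_V := (step_act_V prod hk1 vind eind hkn).
Local Notation step_act_A := (step_act_A prod hk1 vind eind hkn).
Local Notation step_prod := (step_prod act hk1 vind eind hkn).
Local Notation PP al be := (Pspan act (firstS (VA al)) (firstS (AA be))).

Lemma V_alE al z : VA al z <-> span (fun y => exists i, al (inl i) /\ y = v i) z.
Proof.
split=> hz.
  apply: span_trans (@span_image _ _ _ (@snd A V) _ _ (fun a u w => erefl) hz).
  move=> y [w [[x [ax ->]] ->]].
  by case: x ax => [i|j] ax /=; [apply: span_gen; exists i | exact: span0].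
have lin : linear (fun y : V => ((0 : A), y)).
  by move=> a u w; rewrite -[RHS]/(a *: 0 + 0, a *: u + w) scaler0 addr0.
apply: span_trans (span_image lin hz) => y [w [[i [ai ->]] ->]].
by apply: span_gen; exists (inl i).
Qed.

Lemma A_alE be z : AA be z <-> span (fun y => exists j, be (inr j) /\ y = e j) z.
Proof.
split=> hz.
  apply: span_trans (@span_image _ _ _ (@fst A V) _ _ (fun a u w => erefl) hz).
  move=> y [w [[x [ax ->]] ->]].
  by case: x ax => [i|j] ax /=; [exact: span0 | apply: span_gen; exists j].
have lin : linear (fun x : A => (x, (0 : V))).
  by move=> a u w; rewrite -[RHS]/(a *: u + w, a *: 0 + 0) scaler0 addr0.
apply: span_trans (span_image lin hz) => y [w [[j [bj ->]] ->]].
by apply: span_gen; exists (inr j).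
Qed.

Lemma firstS_V_span al (y : 'I_k -> V) : (forall l, firstS (VA al) l (y l)) ->
  forall l, span (first_gens v (fun i => al (inl i)) l) (y l).
Proof.
move=> hy l; apply: span_first_gens => [l0|]; last exact: vspan.
by move: (hy l); rewrite /firstS l0 eqxx => /V_alE.
Qed.

Lemma firstS_A_span be (x : 'I_(n - k) -> A) : (forall l, firstS (AA be) l (x l)) ->
  forall l, span (first_gens e (fun j => be (inr j)) l) (x l).
Proof.
move=> hx l; apply: span_first_gens => [l0|]; last exact: espan.
by move: (hx l); rewrite /firstS l0 eqxx => /A_alE.
Qed.

Lemma act_span_ind (P : I -> Prop) (Q : J -> Prop) (S : V -> Prop) :
  S 0 -> (forall a b, S a -> S b -> S (a + b)) -> (forall c a, S a -> S (c *: a)) ->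
  (forall sigma ivs js, P (ivs i0) -> Q (js j0) ->
      S (act sigma (fun l => v (ivs l)) (fun l => e (js l)))) ->
  forall sigma y x, (forall l, span (first_gens v P l) (y l)) ->
    (forall l, span (first_gens e Q l) (x l)) -> S (act sigma y x).
Proof.
move=> S0 SD SZ base sigma y x hy hx.
apply: (multilinear_span_ind (act_ml1 sigma x) S0 SD SZ _ hy) => {hy} y' hy'.
apply: (multilinear_span_ind (act_ml2 sigma y') S0 SD SZ _ hx) => {hx} x' hx'.
have [ivs hivs] := choice _ hy'; have [js hjs] := choice _ hx'.
have -> : y' = (fun l => v (ivs l)) by apply: functional_extensionality => l; case: (hivs l).
have -> : x' = (fun l => e (js l)) by apply: functional_extensionality => l; case: (hjs l).
by apply: base; [apply: (hivs i0).1 | apply: (hjs j0).1].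
Qed.

Lemma act_in_span (P : I -> Prop) (Q : J -> Prop) (G : V -> Prop) :
  (forall sigma ivs js, P (ivs i0) -> Q (js j0) ->
      span G (act sigma (fun l => v (ivs l)) (fun l => e (js l)))) ->
  forall sigma y x, (forall l, span (first_gens v P l) (y l)) ->
    (forall l, span (first_gens e Q l) (x l)) -> span G (act sigma y x).
Proof. by apply: act_span_ind; [exact: span0 | exact: spanD | exact: spanZ]. Qed.

Lemma V_class_submodule al : isClass al ->
  forall sigma u (ys : 'I_k -> V) (xs : 'I_(n - k) -> A),
    VA al u -> VA al (act sigma (withFirst u ys) xs).
Proof.
move=> cl sigma u ys xs hu; apply/V_alE.
apply: (@act_in_span (fun i => al (inl i)) (fun _ => True)).
- move=> s ivs js pi _; have [r [c E]] := v_mult s ivs js; rewrite E.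
  have [->|c0] := eqVneq c 0; first by rewrite scale0r; exact: span0.
  apply/spanZ/span_gen; exists r; split => //.
  exact/(class_step cl (step_act_V c0 E)).
- move=> l; apply: span_first_gens => [l0|]; last exact: vspan.
  by move: hu; rewrite /withFirst l0 eqxx => /V_alE.
- by move=> l; apply: span_first_gens => [_|]; apply: espan.
Qed.

Lemma V_class_basis al : isClass al -> exists Pi : I -> Prop, is_basis_of (VA al) v Pi /\
  forall (sigma : 'S_n) (ivs : 'I_k -> I) (js : 'I_(n - k) -> J), (forall l, Pi (ivs l)) ->
    exists (r : I) (c : F), Pi r /\ act sigma (fun l => v (ivs l)) (fun l => e (js l)) = c *: v r.
Proof.
move=> cl; exists (fun i => al (inl i)); split.
  by split=> [m f c fi _|z]; [apply: vind fi (fun _ => Logic.I) | apply: V_alE].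
move=> s ivs js hp; have [r [c E]] := v_mult s ivs js.
have [c0|c0] := eqVneq c 0.
  by exists (ivs i0), 0; split => //; rewrite E c0 !scale0r.
by exists r, c; split => //; apply/(class_step cl (step_act_V c0 E)).
Qed.

Lemma A_class_ideal be : isClass be ->
  forall (as_ : 'I_n -> A) (l : 'I_n), AA be (as_ l) -> AA be (prod as_).
Proof.
move=> cl as_ l hl; apply/A_alE.
pose G (l' : 'I_n) (z : A) := exists j, (l' = l -> be (inr j)) /\ z = e j.
apply: (multilinear_span_ind (G := G) prod_ml (span0 _) (@spanD _ _ _) (@spanZ _ _ _)); last first.
  move=> l'; have [->|nl] := eqVneq l' l.
    by apply: span_trans (proj1 (A_alE _ _) hl) => y [j [bj ->]]; apply: span_gen; exists j.
  apply: span_trans (espan (as_ l')) => y [j [_ ->]]; apply: span_gen.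
  by exists j; split => // /eqP; rewrite (negbTE nl).
move=> f hf; have [js hjs] := choice _ hf.
have -> : f = (fun l' => e (js l')) by apply: functional_extensionality => l'; case: (hjs l').
have [r [c E]] := e_mult js; rewrite E.
have [->|c0] := eqVneq c 0; first by rewrite scale0r; exact: span0.
apply/spanZ/span_gen; exists r; split => //.
exact/(class_step cl (step_prod l c0 E))/((hjs l).1 erefl).
Qed.

Lemma A_class_basis be : isClass be -> exists Q : J -> Prop, is_basis_of (AA be) e Q /\
  forall js : 'I_n -> J, (forall l, Q (js l)) ->
    exists (r : J) (c : F), Q r /\ prod (fun l => e (js l)) = c *: e r.
Proof.
move=> cl; exists (fun j => be (inr j)); split.
  by split=> [m f c fi _|z]; [apply: eind fi (fun _ => Logic.I) | apply: A_alE].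
move=> js hq; have [r [c E]] := e_mult js.
have [c0|c0] := eqVneq c 0.
  by exists (js (o0 hk1 hkn)), 0; split => //; rewrite E c0 !scale0r.
by exists r, c; split => //; apply/(class_step cl (step_prod (o0 hk1 hkn) c0 E)).
Qed.

Lemma act_basis_Pspan_class al sigma ivs js : isClass al ->
  al (inl (ivs i0)) \/ al (inr (js j0)) ->
  PP al al (act sigma (fun l => v (ivs l)) (fun l => e (js l))).
Proof.
move=> cl H; have [r [c E]] := v_mult sigma ivs js.
have [c0|c0] := eqVneq c 0; first by rewrite E c0 scale0r; exact: span0.
have [aV aA] : al (inl (ivs i0)) /\ al (inr (js j0)).
  rewrite (class_step cl (step_act_V c0 E)) (class_step cl (step_act_A c0 E)).
  by case: H => [/(class_step cl (step_act_V c0 E))|/(class_step cl (step_act_A c0 E))].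
apply: span_gen; exists sigma, (fun l => v (ivs l)), (fun l => e (js l)); split; last split => //.
  move=> l; rewrite /firstS; case: eqP => // l0; rewrite (_ : l = i0); last exact: val_inj.
  by apply/V_alE/span_gen; exists (ivs i0).
move=> l; rewrite /firstS; case: eqP => // l0; rewrite (_ : l = j0); last exact: val_inj.
by apply/A_alE/span_gen; exists (js j0).
Qed.

Lemma Pspan_firstS_V_class al z : isClass al ->
  Pspan act (firstS (VA al)) (@allS A (n - k)) z -> PP al al z.
Proof.
move=> cl; apply: span_trans => w [s [y [x [hy [_ ->]]]]].
apply: (@act_in_span (fun i => al (inl i)) (fun _ => True)).
- by move=> s' ivs js pi _; apply: act_basis_Pspan_class => //; left.
- exact: firstS_V_span.
- by move=> l; apply: span_first_gens => [_|]; apply: espan.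
Qed.

Lemma Pspan_firstS_A_class be z : isClass be ->
  Pspan act (@allS V k) (firstS (AA be)) z -> PP be be z.
Proof.
move=> cl; apply: span_trans => w [s [y [x [_ [hx ->]]]]].
apply: (@act_in_span (fun _ => True) (fun j => be (inr j))).
- by move=> s' ivs js _ pj; apply: act_basis_Pspan_class => //; right.
- by move=> l; apply: span_first_gens => [_|]; apply: vspan.
- exact: firstS_A_span.
Qed.

Lemma act_classes_eq0 al be sigma y x : isClass al -> isClass be -> al <> be ->
  (forall l, firstS (VA al) l (y l)) -> (forall l, firstS (AA be) l (x l)) ->
  act sigma y x = 0.
Proof.
move=> cla clb ne hy hx.
apply: (@act_span_ind (fun i => al (inl i)) (fun j => be (inr j)) (fun z => z = 0)).
- by [].
- by move=> a b -> ->; rewrite addr0.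
- by move=> c a ->; rewrite scaler0.
- move=> s ivs js pi pj; have [r [c E]] := v_mult s ivs js.
  have [c0|c0] := eqVneq c 0; first by rewrite E c0 scale0r.
  case: ne; apply: (class_eq cla clb (x := inl r)).
  + exact/(class_step cla (step_act_V c0 E)).
  + exact/(class_step clb (step_act_A c0 E)).
- exact: firstS_V_span.
- exact: firstS_A_span.
Qed.

Lemma Pspan_classes_zero al be : isClass al -> isClass be -> al <> be -> zero_sp (PP al be).
Proof.
move=> cla clb ne; apply: span_zero => w [s [y [x [hy [hx ->]]]]].
exact: act_classes_eq0 ne hy hx.
Qed.

Lemma Pspan_mono (S S' : 'I_k -> V -> Prop) (T T' : 'I_(n - k) -> A -> Prop) z :
  (forall l y, S l y -> S' l y) -> (forall l x, T l x -> T' l x) ->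
  Pspan act S T z -> Pspan act S' T' z.
Proof.
move=> hS hT; apply: span_trans => w [s [y [x [hy [hx ->]]]]].
by apply: span_gen; exists s, y, x; split; [move=> l; apply: hS | split => // l; apply: hT].
Qed.

Lemma nonzero_Pspan_firstS_V (S0 : V -> Prop) (T : 'I_(n - k) -> A -> Prop) :
  nonzero_sp (Pspan act (firstS S0) T) -> nonzero_sp S0.
Proof.
move=> [z [hz nz]]; apply: NNPP => hS; apply/nz/(span_zero _ hz).
move=> w [s [y [x [hy [_ ->]]]]].
have y0 : y i0 = 0 by apply: NNPP => ne; apply: hS; exists (y i0); split => //; exact: (hy i0).
by rewrite -(upd_id y i0) y0 (multilinear_upd0 (act_ml1 s x)).
Qed.

Lemma nonzero_Pspan_firstS_A (S : 'I_k -> V -> Prop) (T0 : A -> Prop) :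
  nonzero_sp (Pspan act S (firstS T0)) -> nonzero_sp T0.
Proof.
move=> [z [hz nz]]; apply: NNPP => hT; apply/nz/(span_zero _ hz).
move=> w [s [y [x [_ [hx ->]]]]].
have x0 : x j0 = 0 by apply: NNPP => ne; apply: hT; exists (x j0); split => //; exact: (hx j0).
by rewrite -(upd_id x j0) x0 (multilinear_upd0 (act_ml2 s y)).
Qed.

Lemma V_direct_sum : direct_sum (fun _ => True) VA (OmegaV prod act v e).
Proof.
have -> : VA = fun al => span (fun y => exists i, al (inl i) /\ y = v i).
  apply: functional_extensionality => al; apply: functional_extensionality => z.
  exact/propositional_extensionality/V_alE.
apply: (direct_sum_partition vind vspan) => [i|al1 al2 x [c1 _] [c2 _]]; last exact: class_eq c1 c2.
have [cl cx] := class_of prod act v e (inl i).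
exists (connected prod act v e (inl i)); split => //; split => //.
by exists (v i); split; [apply/V_alE/span_gen; exists i | exact: basis_neq0].
Qed.

Lemma A_direct_sum : direct_sum (fun _ => True) AA (OmegaA prod act v e).
Proof.
have -> : AA = fun be => span (fun y => exists j, be (inr j) /\ y = e j).
  apply: functional_extensionality => be; apply: functional_extensionality => z.
  exact/propositional_extensionality/A_alE.
apply: (direct_sum_partition eind espan) => [j|al1 al2 x [c1 _] [c2 _]]; last exact: class_eq c1 c2.
have [cl cx] := class_of prod act v e (inr j).
exists (connected prod act v e (inr j)); split => //; split => //.
by exists (e j); split; [apply/A_alE/span_gen; exists j | exact: basis_neq0].
Qed.

Lemma OmegaV'_Pspan al : OmegaV' prod act v e al -> nonzero_sp (PP al al).
Proof. by move=> [[cl _] [z [hz nz]]]; exists z; split => //; apply: Pspan_firstS_V_class. Qed.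

Lemma OmegaV'_OmegaA' al : OmegaV' prod act v e al -> OmegaA' prod act v e al.
Proof.
move=> hal; have [z [hz nz]] := OmegaV'_Pspan hal; have [[cl _] _] := hal.
split; first by split => //; apply: (nonzero_Pspan_firstS_A (S := firstS (VA al))); exists z.
by exists z; split => //; apply: Pspan_mono hz.
Qed.

Lemma OmegaA'_OmegaV' be : OmegaA' prod act v e be -> OmegaV' prod act v e be.
Proof.
move=> [[cl _] [z [hz nz]]]; have {}hz := Pspan_firstS_A_class cl hz.
split; first by split => //; apply: (nonzero_Pspan_firstS_V (T := firstS (AA be))); exists z.
by exists z; split => //; apply: Pspan_mono hz.
Qed.

Lemma Pspan_OmegaV' al : OmegaV' prod act v e al -> nonzero_sp (PP al al) /\
  forall be, OmegaA prod act v e be -> be <> al -> zero_sp (PP al be).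
Proof.
move=> hal; split; first exact: OmegaV'_Pspan.
move=> be [clb _] ne; have [[cla _] _] := hal.
by apply: Pspan_classes_zero => // eq_al_be; apply: ne; rewrite eq_al_be.
Qed.
End Decomposition.

Unset Implicit Arguments.

Theorem mainTheorem12 (F : fieldType) (n k : nat)
  (hn : (2 <= n)%N) (hk1 : (1 <= k)%N) (hkn : (k <= n - 1)%N)
  (A V : lmodType F)
  (prod : ('I_n -> A) -> A)
  (act : 'S_n -> ('I_k -> V) -> ('I_(n - k) -> A) -> V)
  (I J : Type) (v : I -> V) (e : J -> A)
  (prod_ml : multilinear prod)
  (act_ml1 : forall sigma x, multilinear (fun y => act sigma y x))
  (act_ml2 : forall sigma y, multilinear (fun x => act sigma y x))
  (e_basis : is_basis_of (fun _ => True) e (fun _ => True))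
  (v_basis : is_basis_of (fun _ => True) v (fun _ => True))
  (e_mult : forall js : 'I_n -> J, exists (j : J) (c : F), prod (fun l => e (js l)) = c *: e j)
  (v_mult : forall (sigma : 'S_n) (ivs : 'I_k -> I) (js : 'I_(n - k) -> J),
      exists (r : I) (c : F), act sigma (fun l => v (ivs l)) (fun l => e (js l)) = c *: v r) :
  let VA := V_al v e in
  let AA := A_al v e in
  let OV := OmegaV prod act v e in
  let OA := OmegaA prod act v e in
  let OV' := OmegaV' prod act v e in
  let OA' := OmegaA' prod act v e in
  let P := fun al be => Pspan act (firstS (VA al)) (firstS (AA be)) in
  direct_sum (fun _ => True) VA OV /\
  (forall al, OV al ->
     (forall (sigma : 'S_n) (u : V) (ys : 'I_k -> V) (xs : 'I_(n - k) -> A),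
        VA al u -> VA al (act sigma (withFirst u ys) xs)) /\
     (exists Pi : I -> Prop, is_basis_of (VA al) v Pi /\
        forall (sigma : 'S_n) (ivs : 'I_k -> I) (js : 'I_(n - k) -> J),
          (forall l, Pi (ivs l)) ->
          exists (r : I) (c : F), Pi r /\
            act sigma (fun l => v (ivs l)) (fun l => e (js l)) = c *: v r)) /\
  direct_sum (fun _ => True) AA OA /\
  (forall be, OA be ->
     (forall (as_ : 'I_n -> A) (l : 'I_n), AA be (as_ l) -> AA be (prod as_)) /\
     (exists Q : J -> Prop, is_basis_of (AA be) e Q /\
        forall js : 'I_n -> J, (forall l, Q (js l)) ->
          exists (r : J) (c : F), Q r /\ prod (fun l => e (js l)) = c *: e r)) /\
  (exists f : (Kidx I J -> Prop) -> (Kidx I J -> Prop),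
     (forall al, OV' al -> OA' (f al)) /\
     (forall al1 al2, OV' al1 -> OV' al2 -> f al1 = f al2 -> al1 = al2) /\
     (forall be, OA' be -> exists al, OV' al /\ f al = be) /\
     (forall al, OV' al ->
        nonzero_sp (P al (f al)) /\
        (forall be, OA be -> be <> f al -> zero_sp (P al be)))).
Proof.
move=> VA AA OV OA OV' OA' P.
split; first by apply: V_direct_sum.
split.
  by move=> al [cl _]; split; move: cl; [apply: V_class_submodule | apply: V_class_basis].
split; first by apply: A_direct_sum.
split; first by move=> be [cl _]; split; move: cl; [apply: A_class_ideal | apply: A_class_basis].
exists id; split; first by apply: OmegaV'_OmegaA'.
split; first by [].
split; first by move=> be hbe; exists be; split => //; move: hbe; apply: OmegaA'_OmegaV'.
by move=> al; apply: Pspan_OmegaV'.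
Qed.
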